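(* Let $W\in\mathbb{R}^{n\times n}$ be the signed adjacency matrix of a signed digraph with $W\mathbf{1}=\mathbf{1}$. If $W$ is eventually stochastic, or if $W$ is weight balanced ($W^\top\mathbf{1}=\mathbf{1}$) with the eigenvalue $1$ simple and strictly dominant, then $W$ is irreducible (equivalently, the digraph is strongly connected).
   Context: $W$ is a real matrix (entries of any sign); the digraph has an edge from $j$ to $i$ iff $W_{ij}\neq0$. $W$ is eventually positive if there is $t_0\in\mathbb{Z}_{\ge0}$ with $W^t$ entrywise positive for all integers $t\ge t_0$; eventually stochastic means eventually positive and $W\mathbf{1}=\mathbf{1}$. ''The eigenvalue $1$ is simple and strictly dominant'' means $1$ has algebraic multiplicity one and $|\lambda|<1$ for every other eigenvalue. $W$ is irreducible if there is no permutation matrix $P$ with $P^\top WP$ block upper triangular with two nontrivial square diagonal blocks. *)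

From HB Require Import structures.
From mathcomp Require Import all_boot all_order all_algebra all_fingroup.
From mathcomp Require Import reals.
From mathcomp Require Import complex.
Set Implicit Arguments. Unset Strict Implicit. Unset Printing Implicit Defensive.
Import Order.TTheory GRing.Theory Num.Theory.
Local Open Scope ring_scope.
Local Open Scope complex_scope.

Definition ones (R : pzRingType) (n : nat) : 'cV[R]_n := const_mx 1.

Definition eventually_positive (R : realType) (n : nat) (W : 'M[R]_n) : Prop :=
  exists t0 : nat, forall t : nat, (t0 <= t)%N ->
    forall i j : 'I_n, 0 < (W ^+ t) i j.

Definition eventually_stochastic (R : realType) (n : nat) (W : 'M[R]_n) : Prop :=
  eventually_positive W /\ W *m ones R n = ones R n.

Definition char_polyC (R : realType) (n : nat) (W : 'M[R]_n) : {poly R[i]} :=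
  map_poly (fun x : R => x%:C) (char_poly W).

Definition one_simple_strictly_dominant (R : realType) (n : nat) (W : 'M[R]_n) : Prop :=
  mup 1 (char_polyC W) = 1%N /\
  forall z : R[i], root (char_polyC W) z -> z != 1 -> `|z| < 1.

(* Irreducibility: no permutation matrix P such that P^T W P is block upper
   triangular with two nontrivial square diagonal blocks (sizes k and n-k,
   0 < k < n), i.e. whose lower-left (n-k) x k block vanishes. *)
Definition irreducible_mx (R : pzRingType) (n : nat) (W : 'M[R]_n) : Prop :=
  ~ exists (s : 'S_n) (k : nat), [/\ (0 < k)%N, (k < n)%N &
      forall i j : 'I_n, (k <= i)%N -> (j < k)%N ->
        ((perm_mx s)^T *m W *m perm_mx s) i j = 0].

From HB Require Import structures.
From mathcomp Require Import all_boot all_order all_algebra all_fingroup.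
From mathcomp Require Import reals complex.
Set Implicit Arguments. Unset Strict Implicit. Unset Printing Implicit Defensive.
Import Order.TTheory GRing.Theory Num.Theory.
Local Open Scope ring_scope.

(* Suppose P^T W P is block upper triangular with diagonal blocks A and D.
   Block upper triangular matrices are closed under products, so every power
   of P^T W P has a zero lower-left block and W cannot be eventually positive.
   If moreover W 1 = 1 and W^T 1 = 1, the same holds for P^T W P, whence
   D 1 = 1 and 1^T A = 1^T: the eigenvalue 1 occurs in both diagonal blocks,
   so its algebraic multiplicity in char_poly W = char_poly A * char_poly D is
   at least two and 1 is not simple. *)

Lemma perm_mx_ones (R : pzRingType) n (s : 'S_n) :
  perm_mx s *m ones R n = ones R n.
Proof. by rewrite -row_permE /ones row_perm_const. Qed.

Lemma trmx_perm_mxK (R : comNzRingType) n (s : 'S_n) :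
  (perm_mx s)^T *m perm_mx s = 1%:M :> 'M[R]_n.
Proof. by rewrite tr_perm_mx -perm_mxM mulVg perm_mx1. Qed.

Lemma perm_mx_trmxK (R : comNzRingType) n (s : 'S_n) :
  perm_mx s *m (perm_mx s)^T = 1%:M :> 'M[R]_n.
Proof. by rewrite tr_perm_mx -perm_mxM mulgV perm_mx1. Qed.

Lemma perm_conj_mxE (R : comNzRingType) n (s : 'S_n) (M : 'M[R]_n) i j :
  ((perm_mx s)^T *m M *m perm_mx s) i j = M (s^-1 i)%g (s^-1 j)%g.
Proof.
have -> : perm_mx s = perm_mx (s^-1)^-1 :> 'M[R]_n by rewrite invgK.
by rewrite tr_perm_mx invgK -row_permE -col_permE !mxE.
Qed.

Lemma perm_conj_mxX (R : comNzRingType) n (s : 'S_n) (M : 'M[R]_n) t :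
  ((perm_mx s)^T *m M *m perm_mx s) ^+ t = (perm_mx s)^T *m M ^+ t *m perm_mx s.
Proof.
elim: t => [|t IHt]; first by rewrite !expr0 mulmx1 trmx_perm_mxK.
rewrite !exprSr IHt -!mulmxE !mulmxA; congr (_ *m _).
by rewrite -(mulmxA _ (perm_mx s)) perm_mx_trmxK mulmx1.
Qed.

Lemma trmx_perm_conj (R : comNzRingType) n (s : 'S_n) (M : 'M[R]_n) :
  ((perm_mx s)^T *m M *m perm_mx s)^T = (perm_mx s)^T *m M^T *m perm_mx s.
Proof. by rewrite !trmx_mul trmxK mulmxA. Qed.

Lemma perm_conj_ones (R : comNzRingType) n (s : 'S_n) (M : 'M[R]_n) :
  M *m ones R n = ones R n ->
  ((perm_mx s)^T *m M *m perm_mx s) *m ones R n = ones R n.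
Proof. by move=> M1; rewrite -!mulmxA perm_mx_ones M1 tr_perm_mx perm_mx_ones. Qed.

Lemma char_poly_perm_conj (R : comNzRingType) n (s : 'S_n) (M : 'M[R]_n) :
  char_poly ((perm_mx s)^T *m M *m perm_mx s) = char_poly M.
Proof.
rewrite /char_poly; have -> : char_poly_mx ((perm_mx s)^T *m M *m perm_mx s) =
    (perm_mx s)^T *m char_poly_mx M *m perm_mx s.
  rewrite /char_poly_mx tr_perm_mx !map_mxM !map_perm_mx -tr_perm_mx.
  rewrite mulmxBr mulmxBl; congr (_ - _).
  by rewrite mul_mx_scalar -scalemxAl trmx_perm_mxK scalemx1.
rewrite !det_mulmx det_tr det_perm mulrC mulrA -expr2 -exprM.
by rewrite mulnC exprM sqrrN !expr1n mul1r.
Qed.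

Definition lower_left_zero (R : pzRingType) n k (B : 'M[R]_n) :=
  forall i j : 'I_n, (k <= i)%N -> (j < k)%N -> B i j = 0.

Section LowerLeftZero.

Variables (R : comNzRingType) (n k : nat).

Lemma lower_left_zero1 : lower_left_zero k (1%:M : 'M[R]_n).
Proof.
move=> i j le_k_i lt_j_k; rewrite mxE.
by case: eqP => // eq_ij; move: lt_j_k; rewrite -eq_ij ltnNge le_k_i.
Qed.

Lemma lower_left_zeroM (A B : 'M[R]_n) :
  lower_left_zero k A -> lower_left_zero k B -> lower_left_zero k (A *m B).
Proof.
move=> A0 B0 i j le_k_i lt_j_k; rewrite mxE big1 // => l _.
by case: (ltnP l k) => [/A0->|/B0->] //; rewrite ?mul0r ?mulr0.
Qed.

Lemma lower_left_zeroX (B : 'M[R]_n) t :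
  lower_left_zero k B -> lower_left_zero k (B ^+ t).
Proof.
move=> B0; elim: t => [|t IHt]; first exact: lower_left_zero1.
by rewrite exprSr; apply: lower_left_zeroM.
Qed.

End LowerLeftZero.

Lemma lower_left_zero_block (R : pzRingType) k m (B : 'M[R]_(k + m)) :
  lower_left_zero k B -> B = block_mx (ulsubmx B) (ursubmx B) 0 (drsubmx B).
Proof.
move=> B0; rewrite -{1}(submxK B); congr block_mx.
apply/matrixP => i j; rewrite !mxE; apply: B0 => /=; [exact: leq_addr | exact: ltn_ord].
Qed.

Lemma char_poly_ublock (R : comNzRingType) k m (A : 'M[R]_k) C (D : 'M[R]_m) :
  char_poly (block_mx A C 0 D) = char_poly A * char_poly D.
Proof.
rewrite /char_poly /char_poly_mx map_block_mx map_mx0 (scalar_mx_block k m).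
by rewrite opp_block_mx add_block_mx oppr0 addr0 det_ublock.
Qed.

Lemma char_poly_trmx (R : comNzRingType) n (A : 'M[R]_n) :
  char_poly A^T = char_poly A.
Proof.
rewrite /char_poly -det_tr; congr (\det _).
by apply/matrixP => i j; rewrite !mxE eq_sym.
Qed.

Lemma ones_neq0 (R : nzRingType) n : (0 < n)%N -> ones R n != 0.
Proof.
move=> n_gt0; apply/eqP => /matrixP /(_ (Ordinal n_gt0) 0) /eqP.
by rewrite !mxE oner_eq0.
Qed.

Lemma root_char_poly_fixed_row (F : fieldType) n (A : 'M[F]_n) (v : 'rV_n) :
  v != 0 -> v *m A = v -> root (char_poly A) 1.
Proof.
move=> v_neq0 vA; rewrite -eigenvalue_root_char.
by apply/eigenvalueP; exists v; rewrite ?scale1r.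
Qed.

Lemma mup_map_gt0 (F K : fieldType) (f : {rmorphism F -> K}) (p : {poly F}) x :
  p != 0 -> root p x -> (0 < mup (f x) (map_poly f p))%N.
Proof.
move=> p_neq0 px.
by rewrite -XsubC_dvd ?map_poly_eq0 // dvdp_XsubCl fmorph_root.
Qed.

Lemma mup1_char_poly_ublock_gt1 (F K : fieldType) (f : {rmorphism F -> K})
    k m (A : 'M[F]_k) C (D : 'M[F]_m) :
  (0 < k)%N -> (0 < m)%N ->
  (ones F k)^T *m A = (ones F k)^T -> D *m ones F m = ones F m ->
  (1 < mup 1 (map_poly f (char_poly (block_mx A C 0 D))))%N.
Proof.
move=> k_gt0 m_gt0 A1 D1.
have rootA : root (char_poly A) 1.
  by apply: (root_char_poly_fixed_row _ A1); rewrite trmx_eq0 ones_neq0.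
have rootD : root (char_poly D) 1.
  rewrite -char_poly_trmx; apply: (root_char_poly_fixed_row (v := (ones F m)^T)).
    by rewrite trmx_eq0 ones_neq0.
  by rewrite -trmx_mul D1.
have charP_neq0 p (M : 'M[F]_p) : char_poly M != 0.
  exact/monic_neq0/char_poly_monic.
rewrite char_poly_ublock rmorphM /= mupM ?map_poly_eq0 // -(rmorph1 f).
exact: leq_add (mup_map_gt0 f _ rootA) (mup_map_gt0 f _ rootD).
Qed.

Lemma eventually_positive_not_lower_left_zero (R : realType) n (W : 'M[R]_n)
    (s : 'S_n) k :
  eventually_positive W -> (0 < k < n)%N ->
  ~ lower_left_zero k ((perm_mx s)^T *m W *m perm_mx s).
Proof.
move=> [t0 Wpos] /andP[k_gt0 lt_k_n] /(lower_left_zeroX t0) B0.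
have := B0 (Ordinal lt_k_n) (Ordinal (ltn_trans k_gt0 lt_k_n)) (leqnn k) k_gt0.
rewrite perm_conj_mxX perm_conj_mxE => W0.
by have := Wpos t0 (leqnn t0) (s^-1 (Ordinal lt_k_n))%g
  (s^-1 (Ordinal (ltn_trans k_gt0 lt_k_n)))%g; rewrite W0 ltxx.
Qed.

Lemma doubly_stochastic_reducible_mup1_gt1 (R : realType) n (W : 'M[R]_n)
    (s : 'S_n) k :
  W *m ones R n = ones R n -> W^T *m ones R n = ones R n -> (0 < k < n)%N ->
  lower_left_zero k ((perm_mx s)^T *m W *m perm_mx s) ->
  (1 < mup 1 (char_polyC W))%N.
Proof.
move=> W1 WT1 /andP[k_gt0 lt_k_n].
have [m def_n] : exists m, n = (k + m)%N by exists (n - k)%N; rewrite subnKC // ltnW.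
subst n; have m_gt0 : (0 < m)%N by rewrite -(ltn_add2l k) addn0.
rewrite /char_polyC -(char_poly_perm_conj s).
have := perm_conj_ones s W1; have := perm_conj_ones s WT1.
rewrite -trmx_perm_conj.
move: ((perm_mx s)^T *m W *m perm_mx s) => B BT1 B1 /lower_left_zero_block defB.
rewrite defB in B1 BT1 *.
have onesD : ones R (k + m) = col_mx (ones R k) (ones R m).
  by rewrite /ones col_mx_const.
rewrite onesD mul_block_col mul0mx add0r in B1.
rewrite tr_block_mx trmx0 onesD mul_block_col mul0mx addr0 in BT1.
have [_ D1] := eq_col_mx B1; have [AT1 _] := eq_col_mx BT1.
apply: (mup1_char_poly_ublock_gt1 _ _ k_gt0 m_gt0 _ D1).
by rewrite -[ulsubmx B]trmxK -trmx_mul AT1.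
Qed.

Theorem lemma7 (R : realType) (n : nat) (W : 'M[R]_n) :
  W *m ones R n = ones R n ->
  (eventually_stochastic W \/
   (W^T *m ones R n = ones R n /\ one_simple_strictly_dominant W)) ->
  irreducible_mx W.
Proof.
move=> W1 Hcase [s [k [k_gt0 lt_k_n B0]]].
have k_range : (0 < k < n)%N by rewrite k_gt0.
case: Hcase => [[Wpos _] | [WT1 [mup1 _]]].
  exact: (eventually_positive_not_lower_left_zero Wpos k_range B0).
have := doubly_stochastic_reducible_mup1_gt1 W1 WT1 k_range B0.
by rewrite mup1 ltnn.
Qed.
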